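(* Let $(X,X')$ and $(Y,Y')$ be two Banach couples and let $A\colon X\to Y$ be a bounded linear operator. If there exists an adversarial sequence for $A$ relative to $X'$ and $Y'$, then there exists an adversarial perturbation for $A$ relative to $X'$ and $Y'$.
   Context: A Banach couple is a pair of Banach spaces each of which is continuously embedded in a common Hausdorff topological vector space; set operations such as $X\cap X'$ are taken inside this ambient space via the embeddings. For $z$ in the ambient space of $(Y,Y')$, set $\|z\|_{Y'}=\infty$ if $z\notin Y'$. Given Banach couples $(X,X')$, $(Y,Y')$ and a bounded linear $A\colon X\to Y$: (i) an element $r\in X\cap X'$ is an adversarial perturbation for $A$ (relative to $X'$ and $Y'$) if $Ar\notin Y'$, i.e. $\|Ar\|_{Y'}=\infty$; (ii) a sequence $(r_n)_{n\in\mathbb{N}}$ in $X\cap X'$ is an adversarial sequence for $A$ (relative to $X'$ and $Y'$) if $(r_n)$ is bounded in both $X$ and $X'$ while $(Ar_n)$ is unbounded in $Y'$ (i.e. $\sup_n \|Ar_n\|_{Y'}=\infty$). *)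

From HB Require Import structures.
From mathcomp Require Import all_boot all_order all_algebra.
From mathcomp Require Import all_classical all_reals all_analysis.
Set Implicit Arguments. Unset Strict Implicit. Unset Printing Implicit Defensive.
Import Order.TTheory GRing.Theory Num.Theory.
Import numFieldNormedType.Exports.
Local Open Scope classical_set_scope.
Local Open Scope ring_scope.

Definition cont_embedding (R : realType) (Z : topologicalLmodType R)
  (X : completeNormedModType R) (i : {linear X -> Z}) : Prop :=
  injective i /\ continuous i.

(* ||z||_{X'} for z in the ambient space: the norm of the (unique, by
   injectivity) preimage of z, and +oo if z is not in X' (inf of empty = +oo). *)
Definition norm_in (R : realType) (Z : topologicalLmodType R)
  (X' : completeNormedModType R) (i : {linear X' -> Z}) (z : Z) : \bar R :=
  ereal_inf [set (`|x'|)%:E | x' in [set x' | i x' = z]].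

(* Elements r of X ∩ X' are represented by their X-preimage x (iX x = r). *)
Definition in_inter (R : realType) (Z : topologicalLmodType R)
  (X X' : completeNormedModType R) (iX : {linear X -> Z}) (iX' : {linear X' -> Z})
  (x : X) : Prop := exists x' : X', iX' x' = iX x.

Definition adversarial_perturbation (R : realType) (Z W : topologicalLmodType R)
  (X X' Y Y' : completeNormedModType R)
  (iX : {linear X -> Z}) (iX' : {linear X' -> Z})
  (jY : {linear Y -> W}) (jY' : {linear Y' -> W}) (A : {linear X -> Y}) (r : X) : Prop :=
  in_inter iX iX' r /\ norm_in jY' (jY (A r)) = +oo%E.

Definition adversarial_sequence (R : realType) (Z W : topologicalLmodType R)
  (X X' Y Y' : completeNormedModType R)
  (iX : {linear X -> Z}) (iX' : {linear X' -> Z})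
  (jY : {linear Y -> W}) (jY' : {linear Y' -> W}) (A : {linear X -> Y})
  (r : nat -> X) : Prop :=
  (forall n, in_inter iX iX' (r n)) /\
  (exists M : R, forall n, `|r n| <= M) /\
  (exists M : R, forall n, (norm_in iX' (iX (r n)) <= M%:E)%E) /\
  ereal_sup (range (fun n => norm_in jY' (jY (A (r n))))) = +oo%E.

From HB Require Import structures.
From mathcomp Require Import all_boot all_order all_algebra.
From mathcomp Require Import all_classical all_reals all_analysis.
From mathcomp Require Import ring.
Import Order.TTheory GRing.Theory Num.Theory.
Import numFieldNormedType.Exports.
Local Open Scope classical_set_scope.
Local Open Scope ring_scope.

(* Without an adversarial perturbation, A maps the Banach space X ∩ X' (with
   norm max(|x|_X, |x|_X')) into Y'.  The induced operator X ∩ X' -> Y' has a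
   closed graph, because all embeddings into the Hausdorff ambient spaces are
   continuous; by the closed graph theorem it is bounded, so sequences bounded
   in X and X' are mapped to sequences bounded in Y'.
   The closed graph theorem is obtained from Baire's theorem: some closure of a
   sublevel set [|T x| <= n] has interior, so T is bounded up to arbitrarily
   small errors; correcting the errors along a geometric series, whose sum is
   identified through the closed graph, removes the approximation. *)

Lemma bounded_linear_continuous {R : realFieldType} {V W : normedModType R}
    {f : {linear V -> W}} {C : R} :
  (forall x, `|f x| <= C * `|x|) -> continuous f.
Proof.
move=> fC; apply/linear_bounded_continuous/linear_boundedP.
by near=> r => x; rewrite (le_trans (fC x))// ler_wpM2r.
Unshelve. all: by end_near.
Qed.

Section closed_graph.
Context {R : realType} {V Y : completeNormedModType R} {T : {linear V -> Y}}.

Lemma Baire_sublevel : exists (n : nat) (x0 : V) (r : R),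
  0 < r /\ ball x0 r `<=` closure [set x | `|T x| <= n%:R].
Proof.
pose O n := ~` closure [set x : V | `|T x| <= n%:R].
have O_open n : open (O n) by apply: closed_openC; exact: closed_closure.
have O_cap : \bigcap_n O n = set0.
  rewrite -subset0 => x /(_ (Num.truncn `|T x|).+1 I); apply.
  by apply: subset_closure; rewrite /= ltW// truncnS_gt.
have [n /denseNE[U [[x0 /open_nbhs_nbhs/nbhs_ballP[r r0 xrU]] UOn]]] :
    exists n, ~ dense (O n).
  apply/not_existsP => /(_ _)/contrapT O_dense.
  have /(_ setT) := Baire (fun n => conj (O_open n) (O_dense n)).
  by rewrite O_cap => /(_ (ex_intro _ 0 I) openT)[x][_].
exists n, x0, r; split=> // z /xrU Uz; apply: contrapT => Oz.
by have : (U `&` O n) z by []; rewrite UOn.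
Qed.

Lemma closure_sublevel_approx (c : R) (x0 : V) (r : R) :
    ball x0 r `<=` closure [set x | `|T x| <= c] ->
  forall z, `|z| < r -> forall e, 0 < e -> exists2 a, `|T a| <= c *+ 2 & `|z - a| < e.
Proof.
move=> x0r_sub z zr e e0.
have e20 : 0 < e / 2 by rewrite divr_gt0.
have approx x : ball x0 r x -> exists2 a, `|T a| <= c & `|x - a| < e / 2.
  move=> /x0r_sub/(_ (ball x (e / 2)) (nbhsx_ballx _ _ e20))[a [Ta xa]].
  by exists a; move: xa; rewrite -ball_normE.
have [|a Ta za] := approx (x0 + z).
  by rewrite -ball_normE /= opprD addNKr normrN.
have [b Tb zb] := approx x0 (ballxx _ (le_lt_trans (normr_ge0 z) zr)).
exists (a - b); first by rewrite linearB (le_trans (ler_normB _ _))// mulr2n lerD.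
have -> : z - (a - b) = (x0 + z - a) - (x0 - b).
  by rewrite !opprB [x0 + z]addrC [z + x0 - a]addrAC addrACA subrr addr0 addrAC addrA.
by rewrite (le_lt_trans (ler_normB _ _))// [e]splitr ltrD.
Qed.

Definition approx_bounded (K : R) :=
  forall z e, 0 < e -> exists2 a, `|T a| <= K * `|z| & `|z - a| < e.

Lemma exists_approx_bounded : exists2 K, 0 <= K & approx_bounded K.
Proof.
have [n [x0 [r [r0 /closure_sublevel_approx approx]]]] := Baire_sublevel.
exists (n%:R *+ 2 * 2 / r) => [|z e e0].
  by rewrite divr_ge0 ?mulr_ge0 ?mulrn_wge0 ?ltW.
have [->|z0] := eqVneq z 0.
  by exists 0; rewrite ?linear0 ?addr0 !normr0 ?mulr0.
have t0 : 0 < `|z| * 2 / r by rewrite divr_gt0 ?mulr_gt0 ?normr_gt0.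
have [|| a Ta za] := approx ((`|z| * 2 / r)^-1 *: z) _ (e / (`|z| * 2 / r)).
- rewrite normrZ gtr0_norm ?invr_gt0// invf_div.
  have -> : r / (`|z| * 2) * `|z| = r / 2 by field; rewrite normr_eq0.
  by rewrite ltr_pdivrMr ?ltr_pMr ?ltr1n.
- by rewrite divr_gt0.
exists ((`|z| * 2 / r) *: a).
  rewrite linearZ normrZ gtr0_norm// [X in _ <= X](_ : _ = `|z| * 2 / r * (n%:R *+ 2)).
    by rewrite ler_pM2l.
  by ring.
rewrite -[z in z - _](scalerKV (lt0r_neq0 t0)) -scalerBr normrZ gtr0_norm//.
by rewrite mulrC -ltr_pdivlMr.
Qed.

Hypothesis graph_closed : forall (u : nat -> V) x y,
  u @ \oo --> x -> T \o u @ \oo --> y -> T x = y.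

Lemma approx_bounded_step {K : R} : approx_bounded K ->
  forall w, exists a, `|T a| <= K * `|w| /\ `|w - a| <= `|w| / 2.
Proof.
move=> approxK w; have [->|w0] := eqVneq w 0.
  by exists 0; rewrite linear0 subrr !normr0 mulr0 mul0r.
have [|a Ta wa] := approxK w (`|w| / 2); first by rewrite divr_gt0 ?normr_gt0.
by exists a; split=> //; exact: ltW.
Qed.

Lemma approx_bounded_bounded {K : R} : 0 <= K -> approx_bounded K ->
  forall z, `|T z| <= K * 2 * `|z|.
Proof.
move=> K0 /approx_bounded_step/choice[f f_approx] z.
pose q : R := 2^-1.
have q_lt1 : `|q| < 1 by rewrite ger0_norm ?invr_ge0// invf_lt1// ltr1n.
(* [z = f (zs 0) + ... + f (zs k.-1) + zs k] with [|zs k| <= 2^-k |z|]. *)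
pose zs k := iter k (fun w => w - f w) z.
have zs_le k : `|zs k| <= `|z| * q ^+ k.
  elim: k => [|k IHk]; first by rewrite expr0 mulr1.
  rewrite (le_trans (f_approx _).2)// exprSr mulrA ler_wpM2r// invr_ge0 ler0n.
have zs_cvg0 : zs @ \oo --> 0.
  apply/norm_cvg0P/(squeeze_cvgr _ (cvg_cst 0) (cvg_geometric `|z| q_lt1)).
  by near=> k; rewrite normr_ge0 zs_le.
pose b k := T (f (zs k)).
have b_le k : `|b k| <= geometric (K * `|z|) q k.
  by rewrite /= -mulrA (le_trans (f_approx _).1)// ler_wpM2l.
have series_bE : series b = T \o (fun k => z - zs k).
  apply/funext; elim=> [|k IHk]; first by rewrite /series /= big_geq ?subrr ?linear0.
  by rewrite seriesSr IHk /= -linearD opprB addrA [in RHS]addrAC.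
have normed_b_cvg : cvgn [normed series b].
  apply: series_le_cvg b_le (is_cvg_geometric_series q_lt1) => // k.
  by rewrite /= mulr_ge0 ?mulr_ge0 ?exprn_ge0 ?invr_ge0.
have -> : T z = limn (series b).
  apply: (graph_closed (fun k => z - zs k)).
    by rewrite -[X in _ --> X]subr0; apply: cvgB => //; exact: cvg_cst.
  by rewrite -series_bE; exact: normed_cvg.
rewrite (le_trans (lim_series_norm normed_b_cvg))//.
have <- : limn (series (geometric (K * `|z|) q)) = K * 2 * `|z|.
  rewrite (cvg_lim _ (cvg_geometric_series q_lt1))//.
  by rewrite /q; field.
apply: ler_lim; [exact: normed_b_cvg|exact: is_cvg_geometric_series|].
by near=> n; apply: ler_sum => k _; exact: b_le.
Unshelve. all: by end_near.
Qed.

Theorem closed_graph_continuous : continuous T.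
Proof.
have [K K0 approxK] := exists_approx_bounded.
exact: bounded_linear_continuous (approx_bounded_bounded K0 approxK).
Qed.

End closed_graph.

Lemma closed_equalizer {T U : topologicalType} (f g : T -> U) :
  hausdorff_space U -> continuous f -> continuous g ->
  closed [set x | f x = g x].
Proof.
move=> hU fc gc x clx; apply: hU => A B /fc fA /gc gB.
have [y [fgy [/= yA yB]]] := clx _ (@filterI _ (nbhs x) _ _ _ fA gB).
by exists (f y); split; rewrite // fgy.
Qed.

Lemma norm_in_image {R : realType} {U : topologicalLmodType R}
    {V : completeNormedModType R} {i : {linear V -> U}} :
  injective i -> forall v, norm_in i (i v) = (`|v|)%:E.
Proof.
move=> i_inj v; rewrite /norm_in [X in ereal_inf X](_ : _ = [set (`|v|)%:E]).
  exact: ereal_inf1.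
by apply/seteqP; split=> [_ [w /i_inj -> <-]|_ ->] //=; exists v.
Qed.

Lemma norm_in_notin {R : realType} {U : topologicalLmodType R}
    {V : completeNormedModType R} {i : {linear V -> U}} {z : U} :
  (forall v, i v <> z) -> norm_in i z = +oo%E.
Proof.
move=> z_notin; rewrite /norm_in [X in ereal_inf X](_ : _ = set0).
  exact: ereal_inf0.
by apply/seteqP; split=> // y [v /z_notin].
Qed.

Section intersection_space.
Context {R : realType} {Z : topologicalLmodType R} {X X' : completeNormedModType R}
  {iX : {linear X -> Z}} {iX' : {linear X' -> Z}}.

Definition inter_pred : {pred X * X'} := fun p => iX p.1 == iX' p.2.

Lemma inter_submod_closed : GRing.submod_closed inter_pred.
Proof.
split=> [|a p q]; rewrite !unfold_in /= ?linear0 // => /eqP pE /eqP qE.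
by rewrite !linearP pE qE.
Qed.

HB.instance Definition _ :=
  GRing.isSubmodClosed.Build R (X * X')%type inter_pred inter_submod_closed.

Definition inter_space := {p : X * X' | p \in inter_pred}.
HB.instance Definition _ := [isSub of inter_space for @sval _ _].
HB.instance Definition _ := [Choice of inter_space by <:].
HB.instance Definition _ := [SubChoice_isSubLmodule of inter_space by <:].

(* The norm of [X * X'] is the max norm, so this is max(|x|_X, |x|_X'). *)
Let inter_norm (p : inter_space) : R := `|val p|.

Lemma inter_normD p q : inter_norm (p + q) <= inter_norm p + inter_norm q.
Proof. by rewrite /inter_norm raddfD ler_normD. Qed.

Lemma inter_normZ (a : R) p : inter_norm (a *: p) = `|a| * inter_norm p.
Proof. by rewrite /inter_norm linearZ normrZ. Qed.

Lemma inter_norm_eq0 p : inter_norm p = 0 -> p = 0.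
Proof. by move/normr0_eq0 => p0; apply: val_inj; rewrite p0. Qed.

HB.instance Definition _ :=
  Lmodule_isNormed.Build R inter_space inter_normD inter_normZ inter_norm_eq0.

Lemma inter_normE (p : inter_space) : `|p| = `|val p|.
Proof. by []. Qed.

Lemma inter_cvgE (F : set_system inter_space) (l : inter_space) : Filter F ->
  F --> l <-> val @ F --> val l.
Proof.
move=> FF; split=> /cvgrPdist_lt Fl; apply/cvgrPdist_lt => e /Fl.
  by apply: filterS => p; rewrite inter_normE raddfB.
by apply: filterS => p; rewrite inter_normE raddfB.
Qed.

Hypotheses (hZ : hausdorff_space Z) (iX_cont : continuous iX)
  (iX'_cont : continuous iX').

Lemma inter_pred_closed : closed [set p : X * X' | iX p.1 = iX' p.2].
Proof.
apply: closed_equalizer => // p.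
  by apply: continuous_comp; [exact: cvg_fst | exact: iX_cont].
by apply: continuous_comp; [exact: cvg_snd | exact: iX'_cont].
Qed.

Lemma inter_complete (F : set_system inter_space) :
  ProperFilter F -> cauchy F -> cvg F.
Proof.
move=> FF /cauchyP Fc.
have component_cvg (U : completeNormedModType R) (pr : X * X' -> U) :
    (forall a b e, ball a e b -> ball (pr a) e (pr b)) -> cvg (pr \o val @ F).
  move=> pr_ball; apply: cauchy_cvg; apply/cauchyP => e /Fc[p Fp].
  exists (pr (val p)).
  suff : F [set q | ball (pr (val p)) e (pr (val q))] by [].
  apply: filterS Fp => q pq; apply: pr_ball.
  by move: pq; rewrite -!ball_normE /= inter_normE raddfB.
have /cvg_ex[l1 Fl1] := component_cvg _ fst (fun _ _ _ => @proj1 _ _).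
have /cvg_ex[l2 Fl2] := component_cvg _ snd (fun _ _ _ => @proj2 _ _).
have Fl : val @ F --> (l1, l2).
  rewrite (_ : val = fun p => ((val p).1, (val p).2)); last by apply/funext => -[[]].
  exact: cvg_pair.
have l_in : (l1, l2) \in inter_pred.
  apply/eqP; apply: (closed_cvg _ inter_pred_closed _ _ Fl).
  by near=> p; apply/eqP; exact: (valP p).
by apply/cvg_ex; exists (Sub (l1, l2) l_in : inter_space); apply/inter_cvgE.
Unshelve. all: by end_near.
Qed.

HB.instance Definition _ := Uniform_isComplete.Build inter_space inter_complete.

Lemma bounded_inter_seq {r : nat -> X} : injective iX' ->
    (forall n, in_inter iX iX' (r n)) -> (exists M, forall n, `|r n| <= M) ->
    (exists M, forall n, (norm_in iX' (iX (r n)) <= M%:E)%E) ->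
  exists2 p : nat -> inter_space, (forall n, (val (p n)).1 = r n) &
    exists M, forall n, `|p n| <= M.
Proof.
move=> iX'_inj /choice[r' r'E] [M r_le] [M' r'_le].
have r_in n : (r n, r' n) \in inter_pred by apply/eqP; rewrite r'E.
exists (fun n => Sub (r n, r' n) (r_in n)) => // ; exists (Num.max M M') => n.
rewrite inter_normE /= ge_max !le_max r_le /= orbC -lee_fin.
by rewrite -(norm_in_image iX'_inj) r'E r'_le.
Qed.

Section restriction_to_intersection.
Context {W : topologicalLmodType R} {Y Y' : completeNormedModType R}
  {jY : {linear Y -> W}} {jY' : {linear Y' -> W}} {A : {linear X -> Y}}.

Lemma no_perturbation_range_in :
    ~ (exists r, adversarial_perturbation iX iX' jY jY' A r) ->
  forall p : inter_space, exists y', jY' y' = jY (A (val p).1).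
Proof.
move=> no_pert p; apply: contrapT => notin; apply: no_pert.
exists (val p).1; split; first by exists (val p).2; apply/esym/eqP; exact: valP p.
by apply: norm_in_notin => y' jy'; apply: notin; exists y'.
Qed.

Hypotheses (hW : hausdorff_space W) (jY_cont : continuous jY)
  (jY'_inj : injective jY') (jY'_cont : continuous jY') (A_cont : continuous A).
Hypothesis A_inter_in : forall p : inter_space, exists y', jY' y' = jY (A (val p).1).

Definition A_inter (p : inter_space) : Y' := projT1 (cid (A_inter_in p)).

Lemma A_interE p : jY' (A_inter p) = jY (A (val p).1).
Proof. exact: projT2 (cid (A_inter_in p)). Qed.

Lemma A_inter_linear : linear A_inter.
Proof.
move=> a p q; apply: jY'_inj.
by rewrite linearP !A_interE linearP /= !linearP.
Qed.

HB.instance Definition _ :=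
  GRing.isLinear.Build R inter_space Y' *:%R A_inter A_inter_linear.

Lemma A_inter_graph_closed (u : nat -> inter_space) p y :
  u @ \oo --> p -> A_inter \o u @ \oo --> y -> A_inter p = y.
Proof.
move=> /inter_cvgE up Auy; apply: jY'_inj; rewrite A_interE.
have jAfst_cont : {for val p, continuous (jY \o A \o fst)}.
  apply: continuous_comp; first exact: cvg_fst.
  by apply: continuous_comp; [exact: A_cont | exact: jY_cont].
have jAu : (fun n => jY (A (val (u n)).1)) @ \oo --> jY (A (val p).1).
  exact: cvg_comp _ _ up jAfst_cont.
have jAu' : (fun n => jY (A (val (u n)).1)) @ \oo --> jY' y.
  under eq_fun do rewrite -A_interE.
  exact: cvg_comp _ _ Auy (jY'_cont y).
exact: (@cvg_unique _ hW _ _ _ _ jAu jAu').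
Qed.

Lemma norm_in_A_inter_le : exists2 C, 0 < C &
  forall p : inter_space, (norm_in jY' (jY (A (val p).1)) <= (C * `|p|)%:E)%E.
Proof.
have [C C0 AC] := linear_lipschitz (closed_graph_continuous A_inter_graph_closed).
by exists C => // p; rewrite -A_interE norm_in_image// lee_fin.
Qed.

End restriction_to_intersection.

End intersection_space.

Theorem theorem2p3 (R : realType) (Z W : topologicalLmodType R)
  (hZ : hausdorff_space Z) (hW : hausdorff_space W)
  (X X' Y Y' : completeNormedModType R)
  (iX : {linear X -> Z}) (iX' : {linear X' -> Z})
  (jY : {linear Y -> W}) (jY' : {linear Y' -> W})
  (hiX : cont_embedding iX) (hiX' : cont_embedding iX')
  (hjY : cont_embedding jY) (hjY' : cont_embedding jY')
  (A : {linear X -> Y}) (hA : exists C : R, forall x : X, `|A x| <= C * `|x|) :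
  (exists r : nat -> X, adversarial_sequence iX iX' jY jY' A r) ->
  exists r : X, adversarial_perturbation iX iX' jY jY' A r.
Proof.
move=> [r [r_in [r_bdd [r'_bdd r_unbdd]]]].
apply: contrapT => /no_perturbation_range_in A_in.
have [p pE [M pM]] := bounded_inter_seq hiX'.1 r_in r_bdd r'_bdd.
have A_cont : continuous A by case: hA => C /bounded_linear_continuous.
have [C C0 AC] :=
  norm_in_A_inter_le hZ hiX.2 hiX'.2 hW hjY.2 hjY'.1 hjY'.2 A_cont A_in.
suff : (ereal_sup (range (fun n => norm_in jY' (jY (A (r n))))) <= (C * M)%:E)%E.
  by rewrite r_unbdd.
apply: ge_ereal_sup => _ [n _ <-]; rewrite -pE (le_trans (AC _))// lee_fin.
by rewrite ler_pM2l.
Qed.
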